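(* Let $T$ be a complete theory with $SOP_3$, witnessed by an indiscernible sequence $\langle a_i:i<\omega\rangle$ and formulas $\varphi(x;y),\psi(x;y)$ satisfying: (1) $\{\varphi(x;y),\psi(x;y)\}$ is contradictory; (2) there is a sequence $\langle c_j:j<\omega\rangle$ with $\varphi(c_j;a_i)$ whenever $i\le j$ and $\psi(c_j;a_i)$ whenever $i>j$; (3) if $i<j$ then $\{\varphi(x;a_j),\psi(x;a_i)\}$ is contradictory. Then the formula $\rho(x;y,z):=\varphi(x;y)\wedge\psi(x;z)$ has the $\infty$-compatible order property on some set $A'\subseteq P_1$ (where $\langle P_n\rangle$ is the characteristic sequence of $\rho$), and $A'$ can be chosen so that the characteristic sequence restricted to $A'$ has support $2$.
   Context: Work in a sufficiently saturated model of $T$. For a formula $\rho(x;w)$ its characteristic sequence is $P_n(w_1,\dots,w_n):=\exists x\bigwedge_{i\le n}\rho(x;w_i)$ (here $w=(y,z)$). $\rho$ has the $\infty$-compatible order property on $A'\subseteq P_1$ if there exist $\langle \alpha_i,\beta_i:i<\omega\rangle$ in $A'$ such that for all $m<\omega$ and all indices, $P_{2m}(\alpha_{i_1},\beta_{j_1},\dots,\alpha_{i_m},\beta_{j_m})$ holds iff $\max\{i_1,\dots,i_m\}<\min\{j_1,\dots,j_m\}$. The sequence restricted to $A'$ has support $2$ if for all $n$ and all $w_1,\dots,w_n\in A'$, $P_n(w_1,\dots,w_n)$ holds iff $P_2(w_i,w_j)$ holds for all $i,j\le n$. *)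

From mathcomp Require Import all_boot.
From Stdlib Require List.

Set Implicit Arguments.
Unset Strict Implicit.
Unset Printing Implicit Defensive.

Record signature := Signature {
  fsym : Type; fari : fsym -> nat;
  rsym : Type; rari : rsym -> nat }.

Section Syntax.
Variable L : signature.

Inductive term : Type :=
  | Var : nat -> term
  | App : forall f : fsym L, ('I_(fari f) -> term) -> term.

(** Formulas: =, relations, falsum, implication, universal quantifier
    (the other connectives are definable classically). *)
Inductive formula : Type :=
  | Eq  : term -> term -> formula
  | Rel : forall r : rsym L, ('I_(rari r) -> term) -> formula
  | Fls : formula
  | Imp : formula -> formula -> formula
  | All : nat -> formula -> formula.

End Syntax.

Arguments Var {L}.
Arguments Fls {L}.

Record structure (L : signature) := Structure {
  dom :> Type;
  pt : dom;
  fint : forall f : fsym L, ('I_(fari f) -> dom) -> dom;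
  rint : forall r : rsym L, ('I_(rari r) -> dom) -> Prop }.

Section Semantics.
Variables (L : signature) (M : structure L).

Fixpoint eval (e : nat -> M) (t : term L) : M :=
  match t with
  | Var n => e n
  | App f ts => @fint L M f (fun i => eval e (ts i))
  end.

Definition upd (e : nat -> M) (n : nat) (m : M) : nat -> M :=
  fun k => if k == n then m else e k.

Fixpoint sat (e : nat -> M) (phi : formula L) : Prop :=
  match phi with
  | Eq t u => eval e t = eval e u
  | Rel r ts => @rint L M r (fun i => eval e (ts i))
  | Fls => False
  | Imp a b => sat e a -> sat e b
  | All n a => forall m : M, sat (upd e n m) a
  end.

Definition env (s : seq M) : nat -> M := fun n => nth (@pt L M) s n.

Definition holds (phi : formula L) (s : seq M) : Prop := sat (env s) phi.

(** phi's free variables are (semantically) among v_0, ..., v_{k-1}. *)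
Definition depends_on (k : nat) (phi : formula L) : Prop :=
  forall e e' : nat -> M, (forall n, n < k -> e n = e' n) ->
    (sat e phi <-> sat e' phi).

(** A formula with parameters is a pair (theta, p): theta(x; p). *)
Definition aleph1_saturated : Prop :=
  forall (k : nat) (A : nat -> M) (Sigma : formula L * seq M -> Prop),
    (forall theta p, Sigma (theta, p) ->
        depends_on (k + size p) theta /\
        forall q, List.In q p -> exists n, A n = q) ->
    (forall l : seq (formula L * seq M),
        (forall q, List.In q l -> Sigma q) ->
        exists x, size x = k /\ forall q, List.In q l -> holds q.1 (x ++ q.2)) ->
    exists x, size x = k /\
      forall theta p, Sigma (theta, p) -> holds theta (x ++ p).

Definition indiscernible (n : nat) (a : nat -> seq M) : Prop :=
  (forall i, size (a i) = n) /\
  forall (k : nat) (theta : formula L) (I J : seq nat),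
    size I = k -> size J = k -> sorted ltn I -> sorted ltn J ->
    depends_on (k * n) theta ->
    (holds theta (flatten (map a I)) <-> holds theta (flatten (map a J))).

(** rho(x; y, z) := phi(x; y) /\ psi(x; z), with |x| = nx, |y| = |z| = ny;
    w = y ++ z. *)
Definition rho (nx ny : nat) (phi psi : formula L) (c w : seq M) : Prop :=
  holds phi (c ++ take ny w) /\ holds psi (c ++ drop ny w).

(** Characteristic sequence of rho: P_n(w_1,...,w_n) = exists x, /\_i rho(x; w_i),
    where ws = [:: w_1; ...; w_n]. *)
Definition charP (nx ny : nat) (phi psi : formula L) (ws : seq (seq M)) : Prop :=
  exists c, size c = nx /\ forall w, List.In w ws -> rho nx ny phi psi c w.

Definition inf_cop (P : seq (seq M) -> Prop) (A' : seq M -> Prop) : Prop :=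
  exists alpha beta : nat -> seq M,
    (forall i, A' (alpha i) /\ A' (beta i)) /\
    forall I J : seq nat, size I = size J -> 0 < size I ->
      (P (flatten [seq [:: alpha ij.1; beta ij.2] | ij <- zip I J]) <->
       all (fun i => all (fun j => i < j) J) I).

Definition support2 (P : seq (seq M) -> Prop) (A' : seq M -> Prop) : Prop :=
  forall ws : seq (seq M), (forall w, List.In w ws -> A' w) ->
    (P ws <-> forall w1 w2, List.In w1 ws -> List.In w2 ws -> P [:: w1; w2]).

End Semantics.

Arguments holds {L} M phi s.
Arguments indiscernible {L} M n a.
Arguments rho {L} M nx ny phi psi c w.
Arguments charP {L} M nx ny phi psi ws.
Arguments inf_cop {L} M P A'.
Arguments support2 {L} M P A'.

From mathcomp Require Import all_boot zify.
From Stdlib Require List FunctionalExtensionality.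

(** By saturation there is a tuple [b], playing the role of [a_omega],
    with [psi(c_j; b)] for every [j].  For [p < u <= omega] take the
    parameter [w_(p,u) := a_p a_u] of [rho].  A finite
    set of such parameters is consistent iff [p < u'] for any two of its
    indices [(p, u)], [(p', u')]: if so, [c_m] with [m] the largest [p]
    realizes it, and otherwise it contains [phi(x; a_p) /\ psi(x; a_q)] with
    [q <= p], which (1) and (3) forbid.  This criterion only looks at pairs,
    whence support 2, and [alpha_i := w_(i+1,omega)], [beta_j := w_(0,j+1)]
    witness the compatible order property. *)

Set Implicit Arguments.
Unset Strict Implicit.
Unset Printing Implicit Defensive.

Lemma In_mem (T : eqType) (x : T) s : List.In x s <-> x \in s.
Proof.
elim: s => //= y s IH; rewrite in_cons; split.
- by case=> [->|/IH->]; rewrite ?eqxx ?orbT.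
- by case/orP=> [/eqP->|/IH]; auto.
Qed.

Lemma In_map (S T : Type) (f : S -> T) y s :
  List.In y (map f s) <-> exists x, List.In x s /\ y = f x.
Proof.
elim: s => /= [|x s IH]; first by split => // -[? []].
rewrite IH; split.
- by case=> [<-|[z [zs ->]]]; [exists x | exists z]; auto.
- by case=> z [[<-|zs] ->]; [left | right; exists z].
Qed.

Lemma In_nth (T : Type) (x0 x : T) s :
  List.In x s -> exists2 i, i < size s & nth x0 s i = x.
Proof.
elim: s => //= y s IH [<-|/IH [i lt_i <-]]; first by exists 0.
by exists i.+1.
Qed.

Lemma In_image_map (S T : Type) (f : S -> T) ws :
  (forall w, List.In w ws -> exists r, w = f r) -> exists rs, ws = map f rs.
Proof.
elim: ws => [|w ws IH] ws_f; first by exists [::].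
have [rs ->] := IH (fun w' h => ws_f w' (or_intror h)).
by have [r ->] := ws_f w (or_introl erefl); exists (r :: rs).
Qed.

Lemma In_bounded_index (T : Type) (f : nat -> T) l :
  (forall q, List.In q l -> exists j, q = f j) ->
  exists N, forall q, List.In q l -> exists2 j, j < N & q = f j.
Proof.
elim: l => [|q l IH] l_f; first by exists 0.
have [N HN] := IH (fun q' h => l_f q' (or_intror h)).
have [j ->] := l_f q (or_introl erefl).
exists (maxn N j.+1) => _ [<-|/HN [j' lt_j' ->]]; [exists j | exists j'] => //; lia.
Qed.

Lemma enumerate_entries (T : Type) (x0 : T) n (c : nat -> seq T) :
  (forall j, size (c j) = n) ->
  exists A : nat -> T, forall j q, List.In q (c j) -> exists k, A k = q.
Proof.
move=> c_size; exists (fun k => nth x0 (c (k %/ n)) (k %% n)) => j q.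
move=> /(In_nth x0) [i]; rewrite c_size => lt_in <-.
have n_gt0 : 0 < n by lia.
exists (j * n + i).
by rewrite divnMDl // divn_small // addn0 modnMDl modn_small.
Qed.

Section Renaming.
Variable L : signature.

Fixpoint tren (s : nat -> nat) (t : term L) : term L :=
  match t with
  | Var n => Var (s n)
  | App f ts => App (fun i => tren s (ts i))
  end.

Fixpoint fren (s : nat -> nat) (p : formula L) : formula L :=
  match p with
  | Eq t u => Eq (tren s t) (tren s u)
  | Rel r ts => Rel (fun i => tren s (ts i))
  | Fls => Fls
  | Imp p q => Imp (fren s p) (fren s q)
  | All n p => All (s n) (fren s p)
  end.

Variable M : structure L.

Lemma eval_tren s (e : nat -> M) t : eval e (tren s t) = eval (e \o s) t.
Proof.
elim: t => //= f ts IH; congr fint.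
exact: FunctionalExtensionality.functional_extensionality.
Qed.

Lemma sat_fren s (p : formula L) (e : nat -> M) :
  injective s -> sat e (fren s p) <-> sat (e \o s) p.
Proof.
move=> s_inj; elim: p e => /= [t u|r ts||p IHp q IHq|n p IH] e.
- by rewrite !eval_tren.
- suff -> : (fun i => eval e (tren s (ts i))) = (fun i => eval (e \o s) (ts i)) by [].
  by apply: FunctionalExtensionality.functional_extensionality => i; rewrite eval_tren.
- by [].
- by rewrite IHp IHq.
- have upd_comp m : upd e (s n) m \o s = upd (e \o s) n m.
    apply: FunctionalExtensionality.functional_extensionality => k.
    by rewrite /= /upd (inj_eq s_inj).
  by split=> H m; [rewrite -upd_comp -IH | rewrite IH upd_comp].
Qed.

Lemma swap_formula nx ny (psi : formula L) :
  depends_on M (nx + ny) psi ->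
  exists theta, depends_on M (ny + nx) theta /\
    forall x y : seq M, size x = nx -> size y = ny ->
      (holds M theta (y ++ x) <-> holds M psi (x ++ y)).
Proof.
move=> dpsi.
pose sw k := if k < nx then ny + k else if k < nx + ny then k - nx else k.
have sw_inj : injective sw by move=> k1 k2; rewrite /sw; do 4?case: ifP; lia.
exists (fren sw psi); split=> [e e' ee'|x y x_size y_size].
  rewrite !sat_fren //; apply: dpsi => k lt_k; apply: ee'.
  by rewrite /sw; do 2?case: ifP; lia.
rewrite /holds sat_fren //; apply: dpsi => k lt_k.
rewrite /env /sw /= !nth_cat x_size y_size.
case: (ltnP k nx) => [lt_knx|le_nxk].
  have -> : (ny + k < ny) = false by lia.
  by rewrite addKn.
by rewrite lt_k; have -> : k - nx < ny by lia.
Qed.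

Lemma aleph1_saturated_realize nx ny (psi : formula L) (c : nat -> seq M) :
  aleph1_saturated M -> depends_on M (nx + ny) psi ->
  (forall j, size (c j) = nx) ->
  (forall N, exists2 y, size y = ny & forall j, j < N -> holds M psi (c j ++ y)) ->
  exists2 b, size b = ny & forall j, holds M psi (c j ++ b).
Proof.
move=> M_sat dpsi c_size fin_sat.
have [theta [dtheta thetaE]] := swap_formula dpsi.
have [A A_c] := enumerate_entries (pt M) c_size.
pose Sigma (q : formula L * seq M) := exists j, q = (theta, c j).
have [|l l_Sigma|b [b_size b_Sigma]] := M_sat ny A Sigma.
- move=> _ _ [j [-> ->]]; split; first by rewrite c_size.
  exact: A_c.
- have [N HN] := In_bounded_index l_Sigma.
  have [y y_size y_psi] := fin_sat N.
  exists y; split=> // _ /HN [j lt_jN ->] /=.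
  by apply/thetaE => //; apply: y_psi.
- by exists b => // j; apply/(thetaE _ b) => //; apply: b_Sigma; exists j.
Qed.

End Renaming.

Lemma charP_subset (L : signature) (M : structure L) nx ny (phi psi : formula L) ws ws' :
  (forall w, List.In w ws' -> List.In w ws) ->
  charP M nx ny phi psi ws -> charP M nx ny phi psi ws'.
Proof. by move=> sub [x [x_size Hx]]; exists x; split=> // w /sub; apply: Hx. Qed.

Lemma mem_flatten_zip (S T U : eqType) (f : S -> U) (g : T -> U) I J :
  size I = size J ->
  flatten [seq [:: f ij.1; g ij.2] | ij <- zip I J] =i map f I ++ map g J.
Proof.
elim: I J => [|i I IH] [|j J] //= [size_IJ] x.
rewrite !inE (IH J) // !mem_cat !inE.
by case: (x == f i); case: (x == g j); case: (x \in map f I).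
Qed.

Section PairParameters.
Variables (L : signature) (M : structure L) (nx ny : nat) (phi psi : formula L).
Variables (a : nat -> seq M) (b : seq M) (c : nat -> seq M).
Hypotheses (a_size : forall i, size (a i) = ny) (b_size : size b = ny).
Hypothesis phi_psi_inconsistent : forall p q x, q <= p -> size x = nx ->
  ~ (holds M phi (x ++ a p) /\ holds M psi (x ++ a q)).
Hypotheses (c_size : forall j, size (c j) = nx)
  (c_phi : forall i j, i <= j -> holds M phi (c j ++ a i))
  (c_psi : forall i j, j < i -> holds M psi (c j ++ a i))
  (b_psi : forall j, holds M psi (c j ++ b)).

Local Notation P := (charP M nx ny phi psi).

(* [None] stands for [omega], indexing [b]. *)
Definition a_ext (u : option nat) : seq M := if u is Some q then a q else b.
Definition below (p : nat) (u : option nat) : bool := if u is Some q then p < q else true.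
Definition pair_param (r : nat * option nat) : seq M := a r.1 ++ a_ext r.2.
Definition pair_params (w : seq M) : Prop := exists r, w = pair_param r /\ below r.1 r.2.

Lemma below_of_charP ws r r' : P ws ->
  List.In (pair_param r) ws -> List.In (pair_param r') ws -> below r.1 r'.2.
Proof.
case=> x [x_size Hx] in_r; case: r' => p' [q|] //= in_r'.
have [phi_x _] := Hx _ in_r; have [_ psi_x] := Hx _ in_r'.
rewrite /pair_param take_size_cat ?a_size // in phi_x.
rewrite /pair_param drop_size_cat ?a_size // in psi_x.
by rewrite ltnNge; apply/negP => le_qp; apply: (phi_psi_inconsistent le_qp x_size).
Qed.

Lemma charP_of_below rs :
  {in rs &, forall r r', below r.1 r'.2} -> P (map pair_param rs).
Proof.
move=> rs_below; exists (c (\max_(r <- rs) r.1)); split=> // _ /In_map [r [/In_mem rs_r ->]].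
rewrite /rho /pair_param take_size_cat ?drop_size_cat ?a_size //; split.
  by apply: c_phi; apply: (leq_bigmax_seq r).
case r2: r.2 => [q|] /=; last exact: b_psi.
have lt_q r' : r' \in rs -> r'.1 < q by move=> rs_r'; have := rs_below r' r rs_r' rs_r; rewrite r2.
apply: c_psi; rewrite big_seq; elim/big_ind: _ => [|m1 m2|]; last exact: lt_q.
- exact: leq_ltn_trans (lt_q r rs_r).
- by rewrite gtn_max => -> ->.
Qed.

Lemma charP_pair_paramE rs :
  P (map pair_param rs) <-> {in rs &, forall r r', below r.1 r'.2}.
Proof.
split=> [HP r r' rs_r rs_r'|]; last exact: charP_of_below.
by apply: (below_of_charP HP); apply/In_map; [exists r | exists r']; rewrite In_mem.
Qed.

Lemma pair_params_charP1 w : pair_params w -> size w = ny + ny /\ P [:: w].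
Proof.
case=> r [-> below_r]; split.
  by rewrite size_cat a_size; case: r.2 => [q|] /=; rewrite ?a_size ?b_size.
by apply: (charP_of_below (rs := [:: r])) => _ _ /[!inE] /eqP-> /eqP->.
Qed.

Lemma pair_params_support2 : support2 M P pair_params.
Proof.
move=> ws ws_pairs; split=> [HP w1 w2 in1 in2|Hpair].
  by apply: charP_subset HP => w [<-|[<-|[]]].
have [rs ws_rs] : exists rs, ws = map pair_param rs.
  by apply: In_image_map => w /ws_pairs [r [-> _]]; exists r.
subst ws.
have In_rs r : r \in rs -> List.In (pair_param r) (map pair_param rs).
  by move=> rs_r; apply/In_map; exists r; rewrite In_mem.
apply/charP_pair_paramE => r r' /In_rs rs_r /In_rs rs_r'.
by apply: (below_of_charP (Hpair _ _ rs_r rs_r')); [left | right; left].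
Qed.

Lemma pair_params_inf_cop : inf_cop M P pair_params.
Proof.
pose alpha i : nat * option nat := (i.+1, None).
pose beta j : nat * option nat := (0, Some j.+1).
exists (pair_param \o alpha), (pair_param \o beta).
split=> [i|I J size_IJ _]; first by split; [exists (alpha i) | exists (beta i)].
have -> : flatten [seq [:: (pair_param \o alpha) ij.1; (pair_param \o beta) ij.2] | ij <- zip I J]
    = map pair_param (flatten [seq [:: alpha ij.1; beta ij.2] | ij <- zip I J]).
  by rewrite map_flatten -map_comp.
rewrite charP_pair_paramE; split=> [H|/allP lt_IJ r r'].
  apply/allP => i I_i; apply/allP => j J_j.
  by apply: (H (alpha i) (beta j)); rewrite mem_flatten_zip // mem_cat map_f ?orbT.
rewrite !mem_flatten_zip // !mem_cat.
case/orP=> /mapP [i I_i ->]; case/orP=> /mapP [j J_j ->] //=.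
exact: (allP (lt_IJ i I_i)).
Qed.

End PairParameters.

Theorem mainTheorem8 (L : signature) (M : structure L)
  (nx ny : nat) (phi psi : formula L) (a : nat -> seq M) :
  aleph1_saturated M ->
  depends_on M (nx + ny) phi -> depends_on M (nx + ny) psi ->
  indiscernible M ny a ->
  (* (1) {phi(x;y), psi(x;y)} is contradictory *)
  ~ (exists x y : seq M, size x = nx /\ size y = ny /\
        holds M phi (x ++ y) /\ holds M psi (x ++ y)) ->
  (* (2) *)
  (exists c : nat -> seq M, (forall j, size (c j) = nx) /\
     forall i j, (i <= j -> holds M phi (c j ++ a i)) /\
                 (j < i -> holds M psi (c j ++ a i))) ->
  (* (3) *)
  (forall i j, i < j -> ~ exists x : seq M, size x = nx /\
       holds M phi (x ++ a j) /\ holds M psi (x ++ a i)) ->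
  exists A' : seq M -> Prop,
    (forall w, A' w -> size w = ny + ny /\ charP M nx ny phi psi [:: w]) /\
    inf_cop M (charP M nx ny phi psi) A' /\
    support2 M (charP M nx ny phi psi) A'.
Proof.
move=> M_sat _ dpsi [a_size _] phi_psi_incons [c [c_size c_ok]] a_incons.
have [b b_size b_psi] : exists2 b, size b = ny & forall j, holds M psi (c j ++ b).
  apply: aleph1_saturated_realize M_sat dpsi c_size _ => N.
  by exists (a N) => // j lt_jN; apply: (c_ok N j).2.
have incons p q x : q <= p -> size x = nx ->
    ~ (holds M phi (x ++ a p) /\ holds M psi (x ++ a q)).
  rewrite leq_eqVlt => /orP [/eqP -> | lt_qp] x_size [phi_x psi_x].
  - by apply: phi_psi_incons; exists x, (a p).
  - by apply: (a_incons q p lt_qp); exists x.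
have c_phi i j : i <= j -> holds M phi (c j ++ a i) by move=> /(c_ok i j).1.
have c_psi i j : j < i -> holds M psi (c j ++ a i) by move=> /(c_ok i j).2.
exists (pair_params a b); split; [|split].
- exact: pair_params_charP1.
- exact: pair_params_inf_cop.
- exact: pair_params_support2.
Qed.
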